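(* Let $f_0,\ldots,f_d\in\mathbb{C}[t_1^{\pm1},\ldots,t_d^{\pm1}]$ be any Laurent polynomials whose ideal of algebraic relations $I=\{g\in\mathbb{C}[x_0,\ldots,x_d]: g(f_0,\ldots,f_d)=0\}$ is principal, $I=\langle g\rangle$ with $g\neq0$. Let $A_i\subset\mathbb{Z}^d$ be the support of $f_i$ and $P_i=\mathrm{conv}(A_i)$ its Newton polytope. Let $Q\subset\mathbb{R}^{d+1}$ be the Newton polytope of the (unique up to scaling) irreducible generator of the prime ideal of algebraic relations among Laurent polynomials $h_0,\ldots,h_d$ with supports $A_0,\ldots,A_d$ whose coefficients are generic relative to these supports (this polytope depends only on $P_0,\ldots,P_d$). Then $Q$ contains a translate of the Newton polytope of $g$.
   Context: ''Generic relative to its support'' means the coefficient vector of $h_i$ lies in a suitable nonempty Zariski open subset of $\mathbb{C}^{A_i}$. The Newton polytope of a polynomial is the convex hull of the exponent vectors of its monomials with nonzero coefficients. *)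

From HB Require Import structures.
From mathcomp Require Import all_boot all_order all_algebra.
From mathcomp Require Import reals Rstruct.
From mathcomp Require Import complex.
From mathcomp Require Import mpoly.

Set Implicit Arguments.
Unset Strict Implicit.
Unset Printing Implicit Defensive.

Import Order.TTheory GRing.Theory Num.Theory.
Local Open Scope ring_scope.

Definition RR : rcfType := Rdefinitions.R.
Definition CC : numClosedFieldType := (complex RR).

(* Laurent polynomials in d variables, presented as the localization
   C[t_1..t_d][1/(t_1...t_d)]: the pair (p, e) denotes p / (t_1...t_d)^e. *)
Definition laurent (d : nat) := ({mpoly CC[d]} * nat)%type.

Definition tprod (d : nat) (e : nat) : {mpoly CC[d]} :=
  (\prod_(j < d) 'X_j) ^+ e.

Definition ladd d (f g : laurent d) : laurent d :=
  (f.1 * tprod d g.2 + g.1 * tprod d f.2, (f.2 + g.2)%N).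
Definition lmul d (f g : laurent d) : laurent d := (f.1 * g.1, (f.2 + g.2)%N).
Definition lexp d (f : laurent d) (k : nat) : laurent d := (f.1 ^+ k, (f.2 * k)%N).
Definition lconst d (c : CC) : laurent d := (c%:MP, 0%N).

Definition lzero d (f : laurent d) : Prop := f.1 = 0.

Definition lsubst d n (g : {mpoly CC[n]}) (f : 'I_n -> laurent d) : laurent d :=
  \big[@ladd d/lconst d 0]_(m <- msupp g)
     lmul (lconst d g@_m) (\big[@lmul d/lconst d 1]_(i < n) lexp (f i) (m i)).

Definition generates_relations d n (g : {mpoly CC[n]}) (f : 'I_n -> laurent d) :=
  forall h : {mpoly CC[n]}, lzero (lsubst h f) <-> exists q, h = q * g.

Definition in_conv n (S : seq 'rV[RR]_n) (x : 'rV[RR]_n) : Prop :=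
  exists w : 'I_(size S) -> RR,
    (forall j, 0 <= w j) /\ \sum_j w j = 1 /\
    x = \sum_j w j *: nth 0 S j.

Definition exponents n (g : {mpoly CC[n]}) : seq 'rV[RR]_n :=
  [seq \row_i ((m : 'X_{1..n}) i)%:R | m <- msupp g].

Definition newton n (g : {mpoly CC[n]}) : 'rV[RR]_n -> Prop :=
  in_conv (exponents g).

Definition zariski_open N (U : ('I_N -> CC) -> Prop) : Prop :=
  exists S : {mpoly CC[N]} -> Prop,
    forall c, U c <-> exists p, S p /\ p.@[c] != 0.

(* Coefficient space of Laurent polynomials h_0..h_d with the same supports as
   f_0..f_d: one coordinate for each (i, monomial of the numerator of f_i). *)
Definition coef_index d (f : 'I_d.+1 -> laurent d) : finType :=
  {i : 'I_d.+1 & 'I_(size (msupp (f i).1))}.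

Definition generic_family d (f : 'I_d.+1 -> laurent d)
    (c : 'I_#|coef_index f| -> CC) : 'I_d.+1 -> laurent d :=
  fun i =>
    (\sum_(j < size (msupp (f i).1))
        c (enum_rank (Tagged (fun i => 'I_(size (msupp (f i).1))) j : coef_index f))
          *: 'X_[nth 0%MM (msupp (f i).1) j],
     (f i).2).

From HB Require Import structures.
From mathcomp Require Import all_boot all_order all_algebra.
From mathcomp Require Import reals Rstruct complex mpoly.
From mathcomp Require Import boolp ring lra zify.
Set Implicit Arguments.
Unset Strict Implicit.
Unset Printing Implicit Defensive.
Import Order.TTheory GRing.Theory Num.Theory.
Local Open Scope ring_scope.

(* Pick a generic coefficient vector c with generator G, so Q = New(G), and
   move the coefficients along the segment from c to the coefficients of f.
   Off the finitely many roots of a polynomial q, the family on the segment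
   is still generic, so it has a nonzero relation (its generator) whose
   exponents all lie in Q.  After clearing denominators, relations supported
   on the finitely many monomials with exponent in Q are the left kernel of a
   matrix polynomial in the segment parameter, and a left kernel that is
   nonzero off the roots of q is nonzero everywhere (a maximal minor would
   otherwise be a nonzero polynomial vanishing off the roots of q).  Hence f
   has a nonzero relation h with New(h) in Q.  Then g divides h = r g, and for
   any monomial b of r, New(g) + b lies in New(g r) because every vertex of the
   Minkowski sum of the exponent sets is an exponent of g r. *)

Section ConvexHull.
Variables (R : realFieldType) (n : nat).
Local Notation V := 'rV[R]_n.
Implicit Types (P : V -> Prop) (S : seq V) (x y z t : V).

Definition conv P x : Prop :=
  exists s : seq (R * V),
    [/\ forall p, p \in s -> 0 <= p.1 /\ P p.2,
        \sum_(p <- s) p.1 = 1 & x = \sum_(p <- s) p.1 *: p.2].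

Lemma conv_sub P x : P x -> conv P x.
Proof.
move=> Px; exists [:: (1, x)]; split; last by rewrite big_seq1 scale1r.
  by move=> p; rewrite inE => /eqP ->.
by rewrite big_seq1.
Qed.

Lemma conv_mono P P' x : (forall y, P y -> P' y) -> conv P x -> conv P' x.
Proof.
move=> PP' [s [Hs s1 ->]]; exists s; split=> // p /Hs[p0 Pp].
by split; last exact: PP'.
Qed.

Lemma conv_flatten P (s : seq (R * V)) :
  (forall p, p \in s -> 0 <= p.1 /\ conv P p.2) ->
  exists s' : seq (R * V),
    [/\ forall p, p \in s' -> 0 <= p.1 /\ P p.2,
        \sum_(p <- s') p.1 = \sum_(p <- s) p.1 &
        \sum_(p <- s') p.1 *: p.2 = \sum_(p <- s) p.1 *: p.2].
Proof.
elim: s => [|[w y] s IH] Hs; first by exists [::].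
have [|s' [Hs' E1 E2]] := IH; first by move=> p ps; apply: Hs; rewrite inE ps orbT.
have [w0 [t [Ht t1 /= yt]]] := Hs (w, y) (mem_head _ _).
exists ([seq (w * p.1, p.2) | p <- t] ++ s'); split.
- move=> p; rewrite mem_cat => /orP[/mapP[p' p't ->]|]; last exact: Hs'.
  by have [? ?] := Ht _ p't; rewrite mulr_ge0.
- by rewrite big_cat big_map -mulr_sumr t1 mulr1 E1 big_cons.
rewrite big_cat big_map big_cons E2 /= {}yt scaler_sumr; congr (_ + _).
by apply: eq_bigr => p _; rewrite scalerA.
Qed.

Lemma conv_trans P P' x : (forall y, P y -> conv P' y) -> conv P x -> conv P' x.
Proof.
move=> PP' [s [Hs s1 ->]].
have [|s' [Hs' E1 E2]] := @conv_flatten P' s.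
  by move=> p /Hs[p0 /PP' Pp].
by exists s'; rewrite E1 E2.
Qed.

Lemma conv_comb2 P a y z : 0 <= a -> a <= 1 ->
  conv P y -> conv P z -> conv P (a *: y + (1 - a) *: z).
Proof.
move=> a0 a1 Py Pz; apply: (@conv_trans (conv P)) => //.
exists [:: (a, y); (1 - a, z)]; split.
- by move=> p; rewrite !inE => /orP[] /eqP -> /=; rewrite ?subr_ge0.
- by rewrite !big_cons big_nil addr0 addrC subrK.
by rewrite !big_cons big_nil addr0.
Qed.

Lemma conv_setU1_split P t x : conv (fun y => P y \/ y = t) x ->
  x = t \/ exists b u, [/\ 0 <= b, b < 1, conv P u & x = b *: t + (1 - b) *: u].
Proof.
move=> [s [Hs s1 sx]].
have w_ge0 (C : pred (R * V)) : 0 <= \sum_(p <- s | C p) p.1.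
  by rewrite big_seq_cond sumr_ge0 // => p /andP[/Hs[]].
pose b := \sum_(p <- s | p.2 == t) p.1.
pose r := \sum_(p <- s | p.2 != t) p.1.
have br : b + r = 1 by rewrite -s1 (bigID (fun p => p.2 == t)).
have {}sx : x = b *: t + \sum_(p <- s | p.2 != t) p.1 *: p.2.
  rewrite sx (bigID (fun p => p.2 == t)) /= scaler_suml; congr (_ + _).
  by apply: eq_bigr => p /eqP ->.
have [r0|r_neq0] := eqVneq r 0.
  left; rewrite sx (_ : b = 1); last by rewrite -br r0 addr0.
  rewrite scale1r big_seq_cond big1 ?addr0 // => p /andP[ps pt].
  move/eqP: r0; rewrite /r big_seq_cond psumr_eq0; last first.
    by move=> q /andP[/Hs[]].
  by move=> /allP /(_ p ps); rewrite ps pt => /eqP ->; rewrite scale0r.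
have r_gt0 : 0 < r by rewrite lt_def r_neq0 w_ge0.
right; exists b, (r^-1 *: \sum_(p <- s | p.2 != t) p.1 *: p.2).
rewrite (_ : 1 - b = r); last by rewrite -br addrC addKr.
split; rewrite ?w_ge0 ?scalerA ?mulfV ?scale1r //; first by rewrite -br ltrDl.
exists [seq (r^-1 * p.1, p.2) | p <- s & p.2 != t]; split.
- move=> p /mapP[p']; rewrite mem_filter => /andP[p't /Hs[w0 [Pp|pt]]] -> /=.
    by rewrite mulr_ge0 ?invr_ge0 // ltW.
  by rewrite pt eqxx in p't.
- by rewrite big_map big_filter -mulr_sumr mulVf.
rewrite big_map big_filter scaler_sumr.
by apply: eq_bigr => p _; rewrite scalerA.
Qed.

(* Eliminate t between the two convex combinations. *)
Lemma conv_setU1_exchange P t x : x <> t ->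
  conv (fun y => P y \/ y = t) x -> conv (fun y => P y \/ y = x) t -> conv P x.
Proof.
move=> xt /conv_setU1_split[//|[b [u [b0 b1 Pu Ex]]]].
move=> /conv_setU1_split[tx|[a [v [a0 a1 Pv Et]]]]; first by case: xt.
have ab_lt1 : a * b < 1 by apply: le_lt_trans a1; rewrite ler_piMr // ltW.
have ab_neq0 : 1 - a * b != 0 by rewrite subr_eq0 eq_sym lt_eqF.
pose c := b * (1 - a) / (1 - a * b).
suff -> : x = c *: v + (1 - c) *: u.
  apply: conv_comb2 => //; rewrite /c.
    by apply: divr_ge0; nra.
  by rewrite ler_pdivrMr ?subr_gt0 // mul1r; nra.
apply/rowP => i; move/rowP/(_ i): Ex; move/rowP/(_ i): Et; rewrite !mxE.
move: (x 0 i) (t 0 i) (v 0 i) (u 0 i) => X T W Y -> EX.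
apply: (mulfI ab_neq0); rewrite mulrBl mul1r {1}EX.
by rewrite /c; field.
Qed.

Definition extreme_point S y := y \in S /\ ~ conv (fun z => z \in S /\ z <> y) y.

(* Induct on |S|, discarding a point lying in the hull of the others. *)
Lemma conv_extreme_points S x : x \in S -> conv (extreme_point S) x.
Proof.
elim: {S}(size S) {-2}S (leqnn (size S)) x => [|k IH] S hS x xS.
  by case: S hS xS.
have [[t [tS tc]]|] :=
  pselect (exists t, t \in S /\ conv (fun z => z \in S /\ z <> t) t); last first.
  by move=> noS; apply: conv_sub; split=> // cx; apply: noS; exists x.
pose S' := filter (predC1 t) S.
have hS' : (size S' <= k)%N.
  have : (0 < count (predC (predC1 t)) S)%N.
    by rewrite -has_count; apply/hasP; exists t; rewrite //= eqxx.
  by move: hS; rewrite /S' size_filter -(count_predC (predC1 t) S); lia.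
have mem_S' z : z \in S -> z <> t -> z \in S'.
  by move=> zS /eqP zt; rewrite mem_filter /= zt.
have extS' y : extreme_point S' y -> extreme_point S y.
  move=> [yS' ny]; move: yS'; rewrite mem_filter => /andP[/= yt yS].
  split=> // cy; apply: ny; apply: (conv_setU1_exchange (t := t)).
  - by move=> ytE; rewrite ytE eqxx in yt.
  - apply: conv_mono cy => z [zS zy].
    by have [->|/eqP zt] := eqVneq z t; [right | left; split; rewrite ?mem_S'].
  - apply: conv_mono tc => z [zS zt].
    by have [->|/eqP zy] := eqVneq z y; [right | left; split; rewrite ?mem_S'].
have [-> {x xS}|/eqP xt] := eqVneq x t.
  apply: conv_trans tc => z [zS zt].
  exact: conv_mono extS' (IH S' hS' z (mem_S' z zS zt)).
exact: conv_mono extS' (IH S' hS' x (mem_S' x xS xt)).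
Qed.

Lemma midpoint_not_extreme S y z : y \in S -> z \in S -> y != z ->
  ~ extreme_point S (2^-1 *: (y + z)).
Proof.
move=> yS zS yz [_]; apply.
have neq_mid (w w' : V) : w != w' -> w <> 2^-1 *: (w + w').
  move=> /eqP ww' /rowP E; apply: ww'; apply/rowP => i.
  by move: (E i); rewrite !mxE; lra.
exists [:: (2^-1, y); (2^-1, z)]; split.
- move=> p; rewrite !inE => /orP[] /eqP -> /=; rewrite invr_ge0 ler0n; split=> //.
    by split=> //; apply: neq_mid.
  by split=> //; rewrite addrC; apply: neq_mid; rewrite eq_sym.
- by rewrite !big_cons big_nil /=; lra.
by rewrite !big_cons big_nil addr0 scalerDr.
Qed.

Lemma conv_coord_sum_le P (b : R) x :
  (forall y, P y -> \sum_i y 0 i <= b) -> conv P x -> \sum_i x 0 i <= b.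
Proof.
move=> Pb [s [Hs s1 ->]].
have -> : \sum_i (\sum_(p <- s) p.1 *: p.2) 0 i = \sum_(p <- s) p.1 * \sum_i p.2 0 i.
  rewrite (eq_bigr (fun i => \sum_(p <- s) p.1 * p.2 0 i)); last first.
    by move=> i _; rewrite summxE; apply: eq_bigr => p _; rewrite mxE.
  by rewrite exchange_big; apply: eq_bigr => p _; rewrite mulr_sumr.
rewrite -[b]mul1r -s1 mulr_suml !big_seq; apply: ler_sum => p /Hs[p0 Pp].
by rewrite ler_wpM2l ?Pb.
Qed.

End ConvexHull.

Lemma in_convP n (S : seq 'rV[RR]_n) x : in_conv S x <-> conv (fun y => y \in S) x.
Proof.
split=> [[w [w0 [w1 ->]]]|[s [Hs s1 sx]]].
  exists [seq (w j, nth 0 S j) | j <- index_enum 'I_(size S)]; rewrite !big_map.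
  by split=> // p /mapP[j _ ->]; split; [apply: w0 | apply: mem_nth].
have sS p : p \in s -> p.2 \in S by move=> /Hs[].
have sum_part (M : zmodType) (F : RR * 'rV[RR]_n -> M) :
    \sum_(j < size S) \sum_(p <- s | index p.2 S == j) F p = \sum_(p <- s) F p.
  rewrite (exchange_big_dep xpredT) //= big_seq [RHS]big_seq; apply: eq_bigr => p ps.
  have lt : (index p.2 S < size S)%N by rewrite index_mem sS.
  by rewrite (big_pred1 (Ordinal lt)) // => j; rewrite /= eq_sym.
exists (fun j : 'I_(size S) => \sum_(p <- s | index p.2 S == j) p.1); split; [|split].
- by move=> j; rewrite big_seq_cond sumr_ge0 // => p /andP[/Hs[]].
- by rewrite sum_part.
rewrite sx -sum_part; apply: eq_bigr => j _.
rewrite scaler_suml big_seq_cond [RHS]big_seq_cond.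
by apply: eq_bigr => p /andP[ps /eqP <-]; rewrite nth_index ?sS.
Qed.

Section NewtonPolytope.
Variable n : nat.
Implicit Types (g h q : {mpoly CC[n]}) (m : 'X_{1..n}).

Definition expo m : 'rV[RR]_n := \row_i (m i)%:R.

Lemma expoD m1 m2 : expo (m1 + m2)%MM = expo m1 + expo m2.
Proof. by apply/rowP => i; rewrite !mxE mnmDE natrD. Qed.

Lemma expo_inj : injective expo.
Proof.
move=> m1 m2 /rowP E; apply/mnmP => i.
by apply/eqP; rewrite -(eqr_nat RR); move: (E i); rewrite !mxE => ->.
Qed.

Lemma newtonE g x :
  newton g x <-> conv (fun y => y \in [seq expo m | m <- msupp g]) x.
Proof. exact: in_convP. Qed.

Lemma newton_exponent g m : m \in msupp g -> newton g (expo m).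
Proof. by move=> mg; apply/newtonE/conv_sub/map_f. Qed.

Lemma newton_trans g h x :
  (forall m, m \in msupp h -> newton g (expo m)) -> newton h x -> newton g x.
Proof.
move=> hg /newtonE hx; apply/newtonE; apply: conv_trans hx => _ /mapP[m mh ->].
exact/newtonE/hg.
Qed.

Lemma newton_mdeg_le g m :
  newton g (expo m) -> (mdeg m <= \max_(m' <- msupp g) mdeg m')%N.
Proof.
have sum_expo m' : \sum_i expo m' 0 i = (mdeg m')%:R.
  by rewrite mdegE natr_sum; apply: eq_bigr => i _; rewrite mxE.
move=> /newtonE /(conv_coord_sum_le (b := (\max_(m' <- msupp g) mdeg m')%:R)).
rewrite sum_expo ler_nat; apply=> _ /mapP[m' m'g ->].
by rewrite sum_expo ler_nat leq_bigmax_seq.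
Qed.

Definition newton_monomials g : seq 'X_{1..n} :=
  [seq m <- map val (index_enum (bmultinom n (\max_(m <- msupp g) mdeg m).+1)) |
     `[< newton g (expo m) >]].

Lemma newton_monomials_uniq g : uniq (newton_monomials g).
Proof. by rewrite filter_uniq // (map_inj_uniq val_inj) index_enum_uniq. Qed.

Lemma mem_newton_monomials g m : m \in newton_monomials g <-> newton g (expo m).
Proof.
rewrite mem_filter; split=> [/andP[/asboolP //]|gm].
rewrite (asboolT gm); apply/mapP.
have lt : (mdeg m < (\max_(m <- msupp g) mdeg m).+1)%N by rewrite ltnS newton_mdeg_le.
by exists (BMultinom lt); rewrite ?mem_index_enum.
Qed.

Lemma mcoeffM_msupp g q m : (g * q)@_m =
  \sum_(a <- msupp g) \sum_(b <- msupp q) g@_a * q@_b * ((a + b)%MM == m)%:R.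
Proof.
rewrite {1}(mpolyE g) {1}(mpolyE q) mulr_suml raddf_sum /=.
apply: eq_bigr => a _; rewrite mulr_sumr raddf_sum /=; apply: eq_bigr => b _.
by rewrite -scalerAl -scalerAr scalerA -mpolyXD mcoeffZ mcoeffX.
Qed.

Definition sum_exponents g q := [seq expo a + expo b | a <- msupp g, b <- msupp q].

(* An extreme point expo a + expo b of the Minkowski sum has a unique
   decomposition, so the coefficient of a + b in g * q is g_a * q_b != 0. *)
Lemma extreme_sum_exponent g q x : extreme_point (sum_exponents g q) x ->
  exists2 m, m \in msupp (g * q) & x = expo m.
Proof.
move=> x_ext; have [/allpairsP[[a b] /= [ag bq xab]] _] := x_ext.
exists (a + b)%MM; last by rewrite expoD.
have unique_ab a' b' : a' \in msupp g -> b' \in msupp q -> (a' != a) || (b' != b) ->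
    ((a' + b')%MM == (a + b)%MM) = false.
  move=> a'g b'q neq; apply/negP => /eqP E.
  have [aa|na] := eqVneq a' a.
    by move: neq E; rewrite aa eqxx /= => /negP nb /addmI /eqP.
  have E' : expo a' + expo b' = expo a + expo b by rewrite -!expoD E.
  apply: (@midpoint_not_extreme _ _ (sum_exponents g q)
                                 (expo a' + expo b) (expo a + expo b')).
  - by apply/allpairsP; exists (a', b).
  - by apply/allpairsP; exists (a, b').
  - apply: contra na => /eqP /rowP Eyz; apply/eqP/expo_inj/rowP => i.
    by move: (Eyz i); move/rowP/(_ i): E'; rewrite !mxE; lra.
  suff -> : 2^-1 *: (expo a' + expo b + (expo a + expo b')) = x by [].
  by rewrite xab; apply/rowP => i; move/rowP/(_ i): E'; rewrite !mxE; lra.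
rewrite mcoeff_msupp mcoeffM_msupp (bigD1_seq a) ?msupp_uniq //=.
rewrite [X in _ + X]big1_seq ?addr0; last first.
  move=> a' /andP[na a'g]; rewrite big1_seq // => b' /andP[_ b'q].
  by rewrite unique_ab ?mulr0 ?na.
rewrite (bigD1_seq b) ?msupp_uniq //= [X in _ + X]big1_seq ?addr0; last first.
  by move=> b' /andP[nb b'q]; rewrite unique_ab ?mulr0 ?nb ?orbT.
by rewrite eqxx mulr1 mulf_neq0 // -mcoeff_msupp.
Qed.

Lemma newton_mulr_shift g q b x :
  b \in msupp q -> newton g x -> newton (g * q) (x + expo b).
Proof.
move=> bq /newtonE [s [Hs s1 ->]]; apply/newtonE.
apply: (@conv_trans _ _ (fun y => y \in sum_exponents g q)).
  move=> y yS; apply: conv_mono (conv_extreme_points yS) => z.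
  by move=> /extreme_sum_exponent[m mgq ->]; rewrite map_f.
exists [seq (p.1, p.2 + expo b) | p <- s]; rewrite !big_map; split=> //.
  move=> _ /mapP[p ps ->] /=; have [p0 /mapP[a ag ->]] := Hs p ps.
  by split=> //; apply/allpairsP; exists (a, b).
under [RHS]eq_bigr do rewrite scalerDr.
by rewrite big_split /= -scaler_suml s1 scale1r.
Qed.

End NewtonPolytope.

Lemma row_freeN_kerP (F : fieldType) k r (M : 'M[F]_(k, r)) :
  reflect (exists2 v : 'rV_k, v != 0 & v *m M = 0) (~~ row_free M).
Proof.
rewrite -kermx_eq0; apply: (iffP rowV0Pn) => [[v /sub_kermxP vM v0]|[v v0 vM]].
  by exists v.
by exists v => //; apply/sub_kermxP.
Qed.

Lemma row_free_colsub (F : fieldType) k r r' (g : 'I_r' -> 'I_r) (M : 'M[F]_(k, r)) :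
  row_free (colsub g M) -> row_free M.
Proof.
move=> /eqP free_gM; rewrite /row_free eqn_leq rank_leq_row -{1}free_gM.
by rewrite -[M in colsub g M]mulmx1 -mulmx_colsub mxrankM_maxl.
Qed.

Section RankSpecialization.
Variable R : numFieldType.

Lemma poly_horner_eq0 (p : {poly R}) : (forall s, p.[s] = 0) -> p = 0.
Proof.
move=> p0; apply: (@roots_geq_poly_eq0 _ _ [seq i%:R | i <- iota 0 (size p)]).
- by apply/allP => s _; apply/rootP.
- by rewrite map_inj_uniq ?iota_uniq // => i j /eqP; rewrite eqr_nat => /eqP.
by rewrite size_map size_iota.
Qed.

(* If A(t) had independent rows, some maximal minor D of A would satisfy
   D(t) != 0; but D vanishes wherever q does not, so D * q = 0. *)
Lemma row_free_map_horner k r (A : 'M[{poly R}]_(k, r)) (q : {poly R}) t :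
  q != 0 -> (forall s, q.[s] != 0 -> ~~ row_free (map_mx (horner_eval s) A)) ->
  ~~ row_free (map_mx (horner_eval t) A).
Proof.
move=> q0 dep; apply/negP => freeAt.
have fullAt : row_full (map_mx (horner_eval t) A)^T by rewrite /row_full mxrank_tr.
pose F := fullrankfun fullAt.
pose D := \det (colsub F A).
have DE s : D.[s] = \det (colsub F (map_mx (horner_eval s) A)).
  by rewrite -map_mxsub det_map_mx.
have Dt : D.[t] != 0.
  by rewrite DE -unitfE -unitmxE -unitmx_tr trmx_mxsub fullrowsub_unit.
suff /eqP : D * q = 0.
  by rewrite mulf_eq0 (negPf q0) orbF => /eqP D0; rewrite D0 horner0 eqxx in Dt.
apply: poly_horner_eq0 => s; rewrite hornerM.
have [->|/dep depAs] := eqVneq q.[s] 0; first by rewrite mulr0.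
apply/eqP; rewrite mulf_eq0 DE; apply/orP; left.
by apply: contraR depAs; rewrite -unitfE -unitmxE -row_free_unit => /row_free_colsub.
Qed.

End RankSpecialization.

Definition relation_mx (R : nzRingType) N n (mons : seq 'X_{1..N}) (coords : seq 'X_{1..n})
    (Phi : 'X_{1..N} -> {mpoly R[n]}) : 'M[R]_(size mons, size coords) :=
  \matrix_(j, i) (Phi (nth 0%MM mons j))@_(nth 0%MM coords i).

Section SupportedRelations.
Variables (R : fieldType) (N n : nat) (mons : seq 'X_{1..N}).
Hypothesis mons_uniq : uniq mons.
Implicit Types (h : {mpoly R[N]}) (Phi : 'X_{1..N} -> {mpoly R[n]}).

Definition supported_relation Phi : Prop :=
  exists h, [/\ h != 0, {subset msupp h <= mons} & \sum_(m <- msupp h) h@_m *: Phi m = 0].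

Definition row_mpoly (v : 'rV[R]_(size mons)) : {mpoly R[N]} :=
  \sum_j v 0 j *: 'X_[nth 0%MM mons j].

Lemma mcoeff_row_mpoly v (j : 'I_(size mons)) : (row_mpoly v)@_(nth 0%MM mons j) = v 0 j.
Proof.
rewrite raddf_sum (bigD1 j) //= big1 ?addr0 => [|j' j'j].
  by rewrite mcoeffZ mcoeffX eqxx mulr1.
by rewrite mcoeffZ mcoeffX nth_uniq // (inj_eq val_inj) (negPf j'j) mulr0.
Qed.

Lemma msupp_row_mpoly v : {subset msupp (row_mpoly v) <= mons}.
Proof.
move=> m; apply: contraLR => mmons; rewrite mcoeff_msupp negbK raddf_sum big1 //= => j _.
rewrite mcoeffZ mcoeffX; case: eqP => [jm|]; last by rewrite mulr0.
by rewrite -jm mem_nth in mmons.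
Qed.

Lemma sum_mcoeffZ_widen (V : lmodType R) h (F : 'X_{1..N} -> V) :
  {subset msupp h <= mons} ->
  \sum_(m <- msupp h) h@_m *: F m = \sum_(m <- mons) h@_m *: F m.
Proof.
move=> hmons; rewrite [RHS](bigID (mem (msupp h))) /= [X in _ + X]big1 ?addr0.
  rewrite -[RHS]big_filter; apply: perm_big; apply: uniq_perm => [||m].
  - exact: msupp_uniq.
  - by rewrite filter_uniq.
  by rewrite mem_filter andb_idr // => /hmons.
by move=> m /memN_msupp_eq0 ->; rewrite scale0r.
Qed.

Variables (coords : seq 'X_{1..n}) (Phi : 'X_{1..N} -> {mpoly R[n]}).
Hypothesis coords_cover : forall m, m \in mons -> {subset msupp (Phi m) <= coords}.

Lemma mulmx_relation_mx_eq0 (v : 'rV[R]_(size mons)) :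
  (v *m relation_mx mons coords Phi == 0) = (\sum_j v 0 j *: Phi (nth 0%MM mons j) == 0).
Proof.
have coefE i : (v *m relation_mx mons coords Phi) 0 i =
    (\sum_j v 0 j *: Phi (nth 0%MM mons j))@_(nth 0%MM coords i).
  by rewrite !mxE raddf_sum /=; apply: eq_bigr => j _; rewrite mxE mcoeffZ.
apply/eqP/eqP => [vM|sum0]; last by apply/rowP => i; rewrite coefE sum0 mcoeff0 mxE.
apply/mpolyP => mu; rewrite mcoeff0.
have [mu_coords|mu_coords] := boolP (mu \in coords).
  have i_lt : (index mu coords < size coords)%N by rewrite index_mem.
  by have := coefE (Ordinal i_lt); rewrite vM mxE /= nth_index // => <-.
rewrite raddf_sum big1 //= => j _; rewrite mcoeffZ memN_msupp_eq0 ?mulr0 //.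
by apply: contra mu_coords; apply: coords_cover; rewrite mem_nth.
Qed.

Lemma supported_relationP : supported_relation Phi <-> ~~ row_free (relation_mx mons coords Phi).
Proof.
split=> [[h [h0 hmons hrel]]|/row_freeN_kerP[v v0]].
  apply/row_freeN_kerP; exists (\row_j h@_(nth 0%MM mons j)).
    apply: contra h0 => /eqP v0; apply/eqP/mpolyP => m; rewrite mcoeff0.
    have [mh|/memN_msupp_eq0 //] := boolP (m \in msupp h).
    have i_lt : (index m mons < size mons)%N by rewrite index_mem hmons.
    by move/rowP: v0 => /(_ (Ordinal i_lt)); rewrite !mxE /= nth_index ?hmons.
  apply/eqP; rewrite mulmx_relation_mx_eq0 -[X in _ == X]hrel sum_mcoeffZ_widen //.
  by rewrite (big_nth 0%MM) big_mkord; apply/eqP; apply: eq_bigr => j _; rewrite mxE.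
move/eqP; rewrite mulmx_relation_mx_eq0 => /eqP vrel.
exists (row_mpoly v); split.
- apply: contra v0 => /eqP h0; apply/eqP/rowP => j.
  by rewrite -mcoeff_row_mpoly h0 mcoeff0 mxE.
- exact: msupp_row_mpoly.
rewrite sum_mcoeffZ_widen; last exact: msupp_row_mpoly.
rewrite (big_nth 0%MM) big_mkord -[RHS]vrel.
by apply: eq_bigr => j _; rewrite mcoeff_row_mpoly.
Qed.

End SupportedRelations.

Lemma supported_relation_map_horner (R : numFieldType) N n (mons : seq 'X_{1..N})
    (Psi : 'X_{1..N} -> {mpoly {poly R}[n]}) (q : {poly R}) t :
  uniq mons -> q != 0 ->
  (forall s, q.[s] != 0 ->
     supported_relation mons (fun m => map_mpoly (horner_eval s) (Psi m))) ->
  supported_relation mons (fun m => map_mpoly (horner_eval t) (Psi m)).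
Proof.
move=> mons_uniq q0 dep.
pose coords := flatten [seq msupp (Psi m) | m <- mons].
have cover s m : m \in mons ->
    {subset msupp (map_mpoly (horner_eval s) (Psi m)) <= coords}.
  move=> mmons mu; rewrite mcoeff_msupp mcoeff_map_mpoly => nz.
  apply/flattenP; exists (msupp (Psi m)); first exact: map_f.
  by rewrite mcoeff_msupp; apply: contraNneq nz => ->; rewrite raddf0.
have relation_mxE s : relation_mx mons coords (fun m => map_mpoly (horner_eval s) (Psi m)) =
    map_mx (horner_eval s) (relation_mx mons coords Psi).
  by apply/matrixP => j i; rewrite !mxE mcoeff_map_mpoly.
apply/(supported_relationP mons_uniq (cover t)); rewrite relation_mxE.
apply: (row_free_map_horner _ q0) => s /dep /(supported_relationP mons_uniq (cover s)).
by rewrite relation_mxE.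
Qed.

Section LaurentRelations.
Variable d : nat.

Lemma tprodD a b : tprod d (a + b) = tprod d a * tprod d b.
Proof. exact: exprD. Qed.

Lemma tprod_neq0 k : tprod d k != 0.
Proof.
rewrite expf_neq0 // prodf_seq_neq0; apply/allP => j _ /=.
apply/eqP => /(congr1 (mcoeff U_(j)%MM)) /eqP.
by rewrite mcoeffX eqxx mcoeff0 oner_eq0.
Qed.

Lemma ladd_big_num (I : eqType) (r : seq I) (G : I -> laurent d) (K : nat) :
  (forall i, i \in r -> ((G i).2 <= K)%N) ->
  (\big[@ladd d/lconst d 0]_(i <- r) G i).1 * tprod d K =
  tprod d (\big[@ladd d/lconst d 0]_(i <- r) G i).2 *
    \sum_(i <- r) (G i).1 * tprod d (K - (G i).2).
Proof.
elim: r => [|a r IH] Gr; first by rewrite !big_nil /= mpolyC0 !mul0r mulr0.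
rewrite !big_cons /=; set X := \big[@ladd d/lconst d 0]_(i <- r) G i.
have {}IH : X.1 * tprod d K = tprod d X.2 * \sum_(i <- r) (G i).1 * tprod d (K - (G i).2).
  by apply: IH => i ir; apply: Gr; rewrite inE ir orbT.
have TK : tprod d K = tprod d (G a).2 * tprod d (K - (G a).2).
  by rewrite -tprodD subnKC // Gr ?mem_head.
transitivity ((G a).1 * tprod d X.2 * tprod d K + tprod d (G a).2 * (X.1 * tprod d K)).
  by ring.
by rewrite IH TK tprodD; ring.
Qed.

Variable n : nat.
Implicit Types (f : 'I_n -> laurent d) (h : {mpoly CC[n]}) (m : 'X_{1..n}).

Definition lmonomial_den f m := (\sum_i (f i).2 * m i)%N.

(* T^K * f^m with T = t_1 ... t_d, provided lmonomial_den f m <= K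
   (otherwise the truncated subtraction makes it meaningless). *)
Definition lmonomial_num f K m : {mpoly CC[d]} :=
  \prod_i (f i).1 ^+ m i * tprod d (K - lmonomial_den f m).

Lemma lzero_lsubst f h K : (forall m, m \in msupp h -> (lmonomial_den f m <= K)%N) ->
  lzero (lsubst h f) <-> \sum_(m <- msupp h) h@_m *: lmonomial_num f K m = 0.
Proof.
move=> hK; pose G m := lmul (lconst d h@_m) (\big[@lmul d/lconst d 1]_i lexp (f i) (m i)).
have G1 m : (G m).1 = (h@_m)%:MP * \prod_i (f i).1 ^+ m i.
  by rewrite /= (big_morph (fun x : laurent d => x.1) (id1 := 1) (op1 := *%R)).
have G2 m : (G m).2 = lmonomial_den f m.
  by rewrite /= add0n (big_morph (fun x : laurent d => x.2) (id1 := 0%N) (op1 := addn)).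
have := @ladd_big_num _ (msupp h) G K; rewrite /lzero /lsubst -/G.
set X := \big[_/_]_(m <- msupp h) G m => XK.
have {}XK : X.1 * tprod d K = tprod d X.2 * \sum_(m <- msupp h) h@_m *: lmonomial_num f K m.
  rewrite XK => [|m mh]; last by rewrite G2 hK.
  by congr (_ * _); apply: eq_bigr => m _; rewrite G1 G2 -mul_mpolyC mulrA.
split=> [X0|S0]; apply/eqP.
  by move: XK; rewrite X0 mul0r => /esym /eqP; rewrite mulf_eq0 (negPf (tprod_neq0 _)).
by move: XK; rewrite S0 mulr0 => /eqP; rewrite mulf_eq0 (negPf (tprod_neq0 _)) orbF.
Qed.

Definition has_relation_on (mons : seq 'X_{1..n}) f : Prop :=
  exists h, [/\ h != 0, {subset msupp h <= mons} & lzero (lsubst h f)].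

Lemma has_relation_onE mons f K : (forall m, m \in mons -> (lmonomial_den f m <= K)%N) ->
  has_relation_on mons f <-> supported_relation mons (lmonomial_num f K).
Proof.
move=> monsK; split=> [] [h [h0 hmons hrel]]; exists h; split=> //.
  by apply/lzero_lsubst => // m /hmons /monsK.
by apply/(lzero_lsubst (K := K)) => // m /hmons /monsK.
Qed.

End LaurentRelations.

Definition segment_poly (R : comNzRingType) (a b : R) : {poly R} := a%:P + (b - a) *: 'X.

Lemma segment_poly0 (R : comNzRingType) (a b : R) : (segment_poly a b).[0] = a.
Proof. by rewrite hornerD hornerC hornerZ hornerX mulr0 addr0. Qed.

Lemma segment_poly1 (R : comNzRingType) (a b : R) : (segment_poly a b).[1] = b.
Proof. by rewrite hornerD hornerC hornerZ hornerX mulr1 addrC subrK. Qed.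

Lemma horner_meval_polyC (R : comNzRingType) k (P : {mpoly R[k]})
    (p : 'I_k -> {poly R}) s :
  ((map_mpoly polyC P).@[p]).[s] = P.@[fun i => (p i).[s]].
Proof.
rewrite !mevalE horner_sum (perm_big _ (msupp_map_mpoly _ (@polyC_inj _))).
apply: eq_bigr => m _; rewrite mcoeff_map_mpoly hornerM hornerC horner_prod.
by congr (_ * _); apply: eq_bigr => i _; rewrite horner_exp.
Qed.

Section GenericFamilies.
Variables (d : nat) (f : 'I_d.+1 -> laurent d).
Local Notation I := #|coef_index f|.

Definition coef_pos i (j : 'I_(size (msupp (f i).1))) : 'I_I :=
  enum_rank (Tagged (fun i => 'I_(size (msupp (f i).1))) j : coef_index f).

Definition coefs_of : 'I_I -> CC := fun k =>
  let t := enum_val k in (f (tag t)).1@_(nth 0%MM (msupp (f (tag t)).1) (tagged t)).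

Lemma generic_family_coefs_of : generic_family coefs_of = f.
Proof.
apply: funext => i; rewrite /generic_family [RHS]surjective_pairing; congr pair.
rewrite [RHS]mpolyE (big_nth 0%MM) big_mkord; apply: eq_bigr => j _.
by rewrite /coefs_of enum_rankK.
Qed.

Definition poly_generic_family (p : 'I_I -> {poly CC}) i : {mpoly {poly CC}[d]} :=
  \sum_(j < size (msupp (f i).1)) p (coef_pos j) *: 'X_[nth 0%MM (msupp (f i).1) j].

Lemma map_poly_generic_family p s i :
  map_mpoly (horner_eval s) (poly_generic_family p i) =
  (generic_family (fun k => (p k).[s]) i).1.
Proof.
by rewrite rmorph_sum /=; apply: eq_bigr => j _; rewrite map_mpolyZ map_mpolyX.
Qed.

Lemma has_relation_on_specialize (p : 'I_I -> {poly CC}) (q : {poly CC})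
    (mons : seq 'X_{1..d.+1}) t :
  uniq mons -> q != 0 ->
  (forall s, q.[s] != 0 -> has_relation_on mons (generic_family (fun k => (p k).[s]))) ->
  has_relation_on mons (generic_family (fun k => (p k).[t])).
Proof.
move=> mons_uniq q0 dep.
pose K := (\sum_(m <- mons) lmonomial_den f m)%N.
have KE (c : 'I_I -> CC) : has_relation_on mons (generic_family c) <->
    supported_relation mons (lmonomial_num (generic_family c) K).
  apply: has_relation_onE => m mmons.
  have -> : lmonomial_den (generic_family c) m = lmonomial_den f m by [].
  by rewrite /K (big_rem m) //= leq_addr.
pose Psi (m : 'X_{1..d.+1}) := \prod_i poly_generic_family p i ^+ m i *
              (\prod_(j < d) 'X_j) ^+ (K - lmonomial_den f m).
have PsiE s : lmonomial_num (generic_family (fun k => (p k).[s])) K =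
    (fun m => map_mpoly (horner_eval s) (Psi m)).
  apply: funext => m; rewrite rmorphM rmorph_prod rmorphXn rmorph_prod /=.
  congr (_ * _ ^+ _); last by apply: eq_bigr => j _; rewrite map_mpolyX.
  by apply: eq_bigr => i _; rewrite rmorphXn -map_poly_generic_family.
apply/(KE (fun k => (p k).[t])); rewrite PsiE.
apply: (supported_relation_map_horner t mons_uniq q0).
by move=> s /dep /KE; rewrite PsiE.
Qed.

End GenericFamilies.

Arguments coefs_of {d} f.

Theorem proposition5p3 (d : nat) (f : 'I_d.+1 -> laurent d) (g : {mpoly CC[d.+1]})
  (Q : 'rV[RR]_d.+1 -> Prop) :
  g != 0 ->
  generates_relations g f ->
  (* Q is the Newton polytope of the generator of the relation ideal of
     h_0..h_d with supports A_0..A_d = supports of f_0..f_d and generic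
     coefficients *)
  (exists U : ('I_#|coef_index f| -> CC) -> Prop,
     zariski_open U /\ (exists c, U c) /\
     forall c, U c ->
       exists G : {mpoly CC[d.+1]},
         G != 0 /\ generates_relations G (generic_family c) /\
         (forall x, newton G x <-> Q x)) ->
  exists v : 'rV[RR]_d.+1, forall x, newton g x -> Q (x + v).
Proof.
move=> _ rel_g [U [[S US] [[c Uc] HG]]].
have [P [SP Pc]] := (US c).1 Uc.
have [G [_ [_ QG]]] := HG c Uc.
pose l k := segment_poly (coefs_of f k) (c k).
pose q := (map_mpoly polyC P).@[l].
have [|s qs|h [h0 hG hrel]] :=
  has_relation_on_specialize (p := l) (q := q) 0 (newton_monomials_uniq G).
- apply: contraNneq Pc => q0; have := horner_meval_polyC P l 1.
  by rewrite -/q q0 horner0 (meval_eq _ (fun k => segment_poly1 _ _)) => <-.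
- have [|Gs [Gs0 [rel_Gs QGs]]] := HG (fun k => (l k).[s]).
    by apply/US; exists P; rewrite -horner_meval_polyC.
  exists Gs; split=> //; last by apply/(rel_Gs Gs); exists 1; rewrite mul1r.
  by move=> m /(newton_exponent (g := Gs)) /QGs /QG /mem_newton_monomials.
have l0 : (fun k => (l k).[0]) = coefs_of f by apply: funext => k; apply: segment_poly0.
move: hrel; rewrite l0 generic_family_coefs_of => /rel_g[r hE].
have r0 : r != 0 by apply: contra h0 => /eqP r0; rewrite hE r0 mul0r.
exists (expo (mlead r)) => x /(newton_mulr_shift (mlead_supp r0)).
rewrite mulrC -hE => hx.
by apply/QG; apply: newton_trans hx => m /hG /mem_newton_monomials.
Qed.
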